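(* Let $T>0$, let $V>0$ and $R\ge 2V$ be constants, and let $H:[0,T]\times\mathbb R^{D_{L-1}}\times\mathbb R^{D_L}\to\mathbb R^{D_{L-1}}$ be continuous and such that: (1) $|H|\le V$ everywhere; (2) for each fixed $t\in[0,T]$ and $a^{(L-1)}\in\mathbb R^{D_{L-1}}$, the map $a^{(L)}\mapsto H(t,a^{(L-1)},a^{(L)})$ is $Ve^{Rt}$-Lipschitz; (3) for each fixed $t\in[0,T]$ and $a^{(L)}\in\mathbb R^{D_L}$, the map $a^{(L-1)}\mapsto H(t,a^{(L-1)},a^{(L)})$ is $V$-Lipschitz. For $a=(a^{(L-1)},a^{(L)})$ let $G(a)\in C([0,T],\mathbb R^{D_{L-1}})$ be the solution of $x(0)=a^{(L-1)}$, $x'(t)=H(t,x(t),a^{(L)})$, $t\in[0,T]$. Then $G$ is an $R$-special function.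
   Context: Here $D_{L-1},D_L\ge1$ are integers. A map $F:\mathbb R^{D_{L-1}}\times\mathbb R^{D_L}\to C([0,T],\mathbb R^{D_{L-1}})$ is $R$-special if (1) for each $a=(a^{(L-1)},a^{(L)})$, $t\mapsto F(a)(t)$ is $R$-Lipschitz and $F(a)(0)=a^{(L-1)}$; and (2) for each $t\in[0,T]$, the map $a\mapsto F(a)(t)$ is $e^{Rt}$-Lipschitz (Euclidean norms). *)

From HB Require Import structures.
From mathcomp Require Import all_boot all_order all_algebra.
From mathcomp Require Import all_classical all_reals all_analysis.
Set Implicit Arguments. Unset Strict Implicit. Unset Printing Implicit Defensive.
Import Order.TTheory GRing.Theory Num.Theory.
Import numFieldNormedType.Exports.
Local Open Scope ring_scope.
Local Open Scope classical_set_scope.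

Definition enorm {K : realType} {n : nat} (v : 'rV[K]_n) : K :=
  Num.sqrt (\sum_(i < n) (v ord0 i) ^+ 2).

Definition enorm2 {K : realType} {n m : nat} (a : 'rV[K]_n * 'rV[K]_m) : K :=
  Num.sqrt (\sum_(i < n) (a.1 ord0 i) ^+ 2 + \sum_(j < m) (a.2 ord0 j) ^+ 2).

Definition Icc0 {K : realType} (T : K) : set K := [set t | 0 <= t <= T].

Definition is_solution {K : realType} {n m : nat} (T : K)
  (H : K -> 'rV[K]_n -> 'rV[K]_m -> 'rV[K]_n)
  (a1 : 'rV[K]_n) (a2 : 'rV[K]_m) (x : K -> 'rV[K]_n) : Prop :=
  x 0 = a1 /\
  {within Icc0 T, continuous x} /\
  (forall t, 0 < t < T -> is_derive t 1 x (H t (x t) a2)).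

(* R-special maps (F given as a curried function of a = (a1,a2), values
   considered on [0,T]). *)
Definition R_special {K : realType} {n m : nat} (T Rc : K)
  (F : 'rV[K]_n -> 'rV[K]_m -> K -> 'rV[K]_n) : Prop :=
  (forall a1 a2,
      F a1 a2 0 = a1 /\
      (forall s t, s \in Icc0 T -> t \in Icc0 T ->
         enorm (F a1 a2 s - F a1 a2 t) <= Rc * `|s - t|)) /\
  (forall t, t \in Icc0 T -> forall a1 a2 b1 b2,
      enorm (F a1 a2 t - F b1 b2 t) <= expR (Rc * t) * enorm2 (a1 - b1, a2 - b2)).

From HB Require Import structures.
From mathcomp Require Import all_boot all_order all_algebra.
From mathcomp Require Import all_classical all_reals all_analysis.
From mathcomp Require Import ring lra.
Set Implicit Arguments.
Unset Strict Implicit.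
Unset Printing Implicit Defensive.

Import Order.TTheory GRing.Theory Num.Theory.
Import numFieldNormedType.Exports.
Local Open Scope ring_scope.
Local Open Scope classical_set_scope.

(* Both estimates come from one comparison principle. Replace |w| by the smooth
   function sqrt(|w|^2 + eps^2), whose derivative along w is at most |w'| by
   Cauchy-Schwarz. If |w'(r)| <= L |w(r)| + e^(L r) psi'(r), then
   e^(-L r) sqrt(|w(r)|^2 + eps^2) - psi(r) is nonincreasing, and letting
   eps -> 0 compares e^(-L r) |w(r)| - psi(r) at the two endpoints.
   With L = 0 and psi(r) = V r this bounds the speed of a solution by V <= R.
   For the difference of the solutions from a and b, hypotheses (2) and (3)
   give L = V and psi(r) = |a2 - b2| e^((R - V) r), which is admissible since
   R - V >= V, whence
     |x(t) - y(t)| <= e^(V t) |a1 - b1| + (e^(R t) - e^(V t)) |a2 - b2|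
                   <= e^(R t) |(a1 - b1, a2 - b2)|. *)

Section EuclideanNorm.
Context {K : realType} {n : nat}.
Implicit Types u v : 'rV[K]_n.

Definition sqnorm u := \sum_(i < n) u ord0 i ^+ 2.
Definition dotr u v := \sum_(i < n) u ord0 i * v ord0 i.

Lemma sqnorm_ge0 u : 0 <= sqnorm u.
Proof. by apply: sumr_ge0 => i _; rewrite sqr_ge0. Qed.

Lemma enorm_ge0 u : 0 <= enorm u.
Proof. exact: sqrtr_ge0. Qed.

Lemma sqr_enorm u : enorm u ^+ 2 = sqnorm u.
Proof. by rewrite sqr_sqrtr // sqnorm_ge0. Qed.

Lemma sqnorm0 : sqnorm 0 = 0.
Proof. by apply: big1 => i _; rewrite mxE expr0n. Qed.

Lemma sqnormN u : sqnorm (- u) = sqnorm u.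
Proof. by apply: eq_bigr => i _; rewrite mxE sqrrN. Qed.

Lemma sqnormD u v : sqnorm (u + v) = sqnorm u + 2 * dotr u v + sqnorm v.
Proof.
rewrite /sqnorm /dotr mulr_sumr -!big_split /=.
by apply: eq_bigr => i _; rewrite mxE; ring.
Qed.

Lemma sqnorm_eq0_dotr u : sqnorm u = 0 -> forall v, dotr u v = 0.
Proof.
move=> /eqP; rewrite psumr_eq0 => [/allP u0 v|i _]; last exact: sqr_ge0.
apply: big1 => i _.
by have := u0 i (mem_index_enum _); rewrite sqrf_eq0 => /eqP ->; rewrite mul0r.
Qed.

Lemma dotrC u v : dotr u v = dotr v u.
Proof. by apply: eq_bigr => i _; rewrite mulrC. Qed.

Lemma dotr_le_enorm u v : dotr u v <= enorm u * enorm v.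
Proof.
set A := enorm u; set B := enorm v.
have [A0 B0] : 0 <= A /\ 0 <= B by split; apply: enorm_ge0.
have key : A * B * dotr u v <= (A * B) ^+ 2.
  suff : 0 <= B ^+ 2 * sqnorm u - 2 * (A * B) * dotr u v + A ^+ 2 * sqnorm v.
    by rewrite -!sqr_enorm -/A -/B; nra.
  have -> : B ^+ 2 * sqnorm u - 2 * (A * B) * dotr u v + A ^+ 2 * sqnorm v =
            \sum_(i < n) (B * u ord0 i - A * v ord0 i) ^+ 2.
    rewrite /sqnorm /dotr !mulr_sumr -sumrN -!big_split /=.
    by apply: eq_bigr => i _; ring.
  by apply: sumr_ge0 => i _; rewrite sqr_ge0.
have [AB0|] := ltrP 0 (A * B); first by rewrite -(ler_pM2l AB0) -expr2.
rewrite le_eqVlt ltNge mulr_ge0 // orbF mulf_eq0 => /orP[] /eqP AB0.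
  by rewrite sqnorm_eq0_dotr ?AB0 ?mul0r // -sqr_enorm -/A AB0 expr0n.
by rewrite dotrC sqnorm_eq0_dotr ?AB0 ?mulr0 // -sqr_enorm -/B AB0 expr0n.
Qed.

Lemma enormD u v : enorm (u + v) <= enorm u + enorm v.
Proof.
rewrite -ler_sqr ?nnegrE ?addr_ge0 ?enorm_ge0 // sqrrD !sqr_enorm sqnormD.
rewrite lerD2r lerD2l; have := dotr_le_enorm u v; lra.
Qed.

Lemma enorm0 : enorm (0 : 'rV[K]_n) = 0.
Proof. by rewrite /enorm -/(sqnorm _) sqnorm0 sqrtr0. Qed.

Lemma enormN u : enorm (- u) = enorm u.
Proof. by rewrite /enorm -/(sqnorm _) sqnormN. Qed.

End EuclideanNorm.

Section SmoothedNorm.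
Context {K : realType} {n : nat}.
Implicit Types (eps : K) (v : 'rV[K]_n).

Definition snorm eps v := Num.sqrt (sqnorm v + eps ^+ 2).

Lemma snorm_gt0 eps v : 0 < eps -> 0 < snorm eps v.
Proof.
move=> eps0; rewrite sqrtr_gt0 ltr_wpDl ?sqnorm_ge0 //.
by rewrite exprn_gt0.
Qed.

Lemma enorm_le_snorm eps v : enorm v <= snorm eps v.
Proof. by rewrite ler_sqrt ?lerDl ?sqr_ge0 // addr_ge0 ?sqnorm_ge0 ?sqr_ge0. Qed.

Lemma snorm_le_enormD eps v : 0 <= eps -> snorm eps v <= enorm v + eps.
Proof.
move=> eps0; rewrite -(ger0_norm (addr_ge0 (enorm_ge0 v) eps0)) -sqrtr_sqr.
rewrite ler_sqrt ?sqr_ge0 // sqrrD sqr_enorm lerD2r lerDl.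
by rewrite mulrn_wge0 // mulr_ge0 ?enorm_ge0.
Qed.

Lemma snorm_continuous eps : continuous (snorm eps).
Proof.
move=> v; apply: continuous_comp; last exact: sqrt_continuous.
apply: (@continuousD _ _ _ sqnorm (fun=> eps ^+ 2)); last exact: cst_continuous.
apply: (@continuous_big _ _ +%R 0 xpredT); first exact: add_continuous.
move=> i _ u; rewrite [X in continuous_at _ X](_ : _ = (fun x : 'rV[K]_n => x ord0 i) * (fun x => x ord0 i)).
  by apply: continuousM; exact: coord_continuous.
by apply/funext => x; rewrite expr2.
Qed.

Lemma is_derive_sqnorm (w : K -> 'rV[K]_n) (r : K) dw :
  is_derive r 1 w dw -> is_derive r 1 (fun s => sqnorm (w s)) (2 * dotr (w r) dw).
Proof.
move=> [dwr <-].
have coord_derive i : is_derive r 1 (fun s => w s ord0 i) ('D_1 w r ord0 i).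
  apply: DeriveDef; first exact: (derivable_mxP w r 1).1 dwr ord0 i.
  by rewrite derive_mx // mxE.
rewrite [X in is_derive _ _ X](_ : _ = \sum_(i < n) (fun s => w s ord0 i) ^+ 2); last first.
  by apply/funext => s; rewrite fct_sumE.
(* instance resolution differentiates the sum termwise, using [coord_derive] *)
apply: is_derive_eq.
rewrite /dotr mulr_sumr; apply: eq_bigr => i _.
by rewrite /= expr1 /GRing.scale /=; ring.
Qed.

Lemma is_derive_snorm eps (w : K -> 'rV[K]_n) (r : K) dw : 0 < eps ->
  is_derive r 1 w dw ->
  is_derive r 1 (fun s => snorm eps (w s)) (dotr (w r) dw / snorm eps (w r)).
Proof.
move=> eps0 wr.
have rad_gt0 : 0 < sqnorm (w r) + eps ^+ 2.
  by rewrite ltr_wpDl ?sqnorm_ge0 // exprn_gt0.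
have rad_derive : is_derive r 1 (fun s => sqnorm (w s) + eps ^+ 2) (2 * dotr (w r) dw).
  have sqnorm_r := is_derive_sqnorm wr; apply: is_derive_eq.
  by rewrite addr0.
have sqrt_r := @is_derive1_comp K Num.sqrt _ r _ _ (is_derive1_sqrt rad_gt0) rad_derive.
change (is_derive r 1 (Num.sqrt \o (fun s => sqnorm (w s) + eps ^+ 2))
  (dotr (w r) dw / snorm eps (w r))).
apply: is_derive_eq.
have := snorm_gt0 (w r) eps0; rewrite /snorm => /lt0r_neq0 N0.
by field.
Qed.

Lemma snorm_derive_le eps v dv : 0 < eps -> dotr v dv / snorm eps v <= enorm dv.
Proof.
move=> eps0; rewrite ler_pdivrMr ?snorm_gt0 //.
apply: (le_trans (dotr_le_enorm v dv)).
by rewrite mulrC ler_wpM2l ?enorm_ge0 ?enorm_le_snorm.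
Qed.

End SmoothedNorm.

Lemma is_derive_expRM {K : realType} (c r : K) :
  is_derive r 1 (fun s => expR (c * s)) (c * expR (c * r)).
Proof.
have lin_r : is_derive r 1 (fun s => c * s) c.
  by apply: is_derive_eq; rewrite /GRing.scale /= mulr1.
have := @is_derive1_comp K expR _ r _ _ (is_derive_expR (c * r)) lin_r.
by rewrite mulrC.
Qed.

Section NormComparison.
Context {K : realType} {n : nat}.

Section Gronwall.
Variables (w dw : K -> 'rV[K]_n) (psi dpsi : K -> K) (L a b : K).
Hypotheses (L_ge0 : 0 <= L) (ab : a <= b).
Hypothesis w_cont : {within `[a, b], continuous w}.
Hypothesis w_derive : forall r : K, r \in `]a, b[%R -> is_derive r 1 w (dw r).
Hypothesis psi_derive : forall r : K, is_derive r 1 psi (dpsi r).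
Hypothesis dw_le : forall r, r \in `]a, b[%R ->
  enorm (dw r) <= L * enorm (w r) + expR (L * r) * dpsi r.

Lemma snorm_gronwall eps : 0 < eps ->
  expR (- L * b) * snorm eps (w b) - psi b <= expR (- L * a) * snorm eps (w a) - psi a.
Proof.
move=> eps0.
pose f r := expR (- L * r) * snorm eps (w r) - psi r.
pose df r := (- L * expR (- L * r)) * snorm eps (w r)
  + expR (- L * r) * (dotr (w r) (dw r) / snorm eps (w r)) - dpsi r.
have fd r : r \in `]a, b[%R -> is_derive r 1 f (df r).
  move=> rab; have snorm_r := is_derive_snorm eps0 (w_derive rab).
  have exp_r := is_derive_expRM (- L) r.
  by apply: is_derive_eq; rewrite /df /GRing.scale /=; ring.
have df_le0 r : r \in `]a, b[%R -> df r <= 0.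
  move=> rab; rewrite /df.
  have E0 : 0 <= expR (- L * r) := ltW (expR_gt0 _).
  have EX : expR (- L * r) * expR (L * r) = 1 by rewrite -expRD mulNr addNr expR0.
  have le_dw := le_trans (snorm_derive_le (w r) (dw r) eps0) (dw_le rab).
  have := ler_wpM2l E0 le_dw; rewrite mulrDr [_ * (_ * dpsi r)]mulrA EX mul1r.
  have := ler_wpM2l E0 (ler_wpM2l L_ge0 (enorm_le_snorm eps (w r))).
  lra.
have fc : {within `[a, b], continuous f}.
  have psic : continuous psi.
    by move=> r; apply/differentiable_continuous/derivable1_diffP; case: (psi_derive r).
  have expc : continuous (fun r => expR (- L * r)).
    move=> r; apply/differentiable_continuous/derivable1_diffP.
    by case: (is_derive_expRM (- L) r).
  move=> r; apply: (@continuousB _ _ (subspace `[a, b])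
    (fun r => expR (- L * r) * snorm eps (w r)) psi); last first.
    exact: (continuous_subspaceT psic).
  apply: (@continuousM _ (subspace `[a, b]) (fun r => expR (- L * r))).
    exact: (continuous_subspaceT expc).
  apply: (@continuous_comp (subspace `[a, b]) _ _ w); first exact: w_cont.
  exact: snorm_continuous.
have f'_le0 r : r \in `]a, b[%R -> f^`() r <= 0.
  by move=> rab; have fr := fd r rab; rewrite derive1E derive_val; exact: df_le0.
have f_derivable r : r \in `]a, b[%R -> derivable f r 1 by case/fd.
apply: (ler0_derive1_le_cc f_derivable f'_le0 fc);
  by rewrite ?in_itv /= ?lexx ?ab.
Qed.

Lemma enorm_gronwall :
  expR (- L * b) * enorm (w b) - psi b <= expR (- L * a) * enorm (w a) - psi a.
Proof.
apply/ler_addgt0Pr => e e0.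
pose eps := e * expR (L * a).
have eps0 : 0 < eps by rewrite mulr_gt0 ?expR_gt0.
have Eeps : expR (- L * a) * eps = e.
  by rewrite /eps mulrCA -expRD mulNr addNr expR0 mulr1.
have Eb_ge0 : 0 <= expR (- L * b) := ltW (expR_gt0 _).
have Ea_ge0 : 0 <= expR (- L * a) := ltW (expR_gt0 _).
have := ler_wpM2l Eb_ge0 (enorm_le_snorm eps (w b)).
have := ler_wpM2l Ea_ge0 (snorm_le_enormD (w a) (ltW eps0)).
move: (snorm_gronwall eps0); rewrite mulrDr Eeps; lra.
Qed.

End Gronwall.


Lemma mean_value_enorm_le (x dx : K -> 'rV[K]_n) (V s t : K) : s <= t ->
  {within `[s, t], continuous x} ->
  (forall r : K, r \in `]s, t[%R -> is_derive r 1 x (dx r)) ->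
  (forall r, r \in `]s, t[%R -> enorm (dx r) <= V) ->
  enorm (x t - x s) <= V * (t - s).
Proof.
move=> st xc xd dx_le.
suff : expR (- 0 * t) * enorm (x t - x s) - V * t
         <= expR (- 0 * s) * enorm (x s - x s) - V * s.
  by rewrite subrr enorm0 oppr0 !mul0r expR0 mul1r mulr0 mulrBr; lra.
have linear_derive (r : K) : is_derive r 1 (fun r => V * r) V.
  by apply: is_derive_eq; rewrite /GRing.scale /= mulr1.
apply: (@enorm_gronwall (fun r => x r - x s) dx (fun r => V * r) (fun=> V)
          0 s t (lexx 0) st _ _ linear_derive).
- move=> r; apply: (@continuousB _ _ (subspace `[s, t]) x (fun=> x s)); first exact: xc.
  exact: cst_continuous.
- move=> r rst; have xr := xd r rst.
  by apply: is_derive_eq; rewrite subr0.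
- by move=> r rst; rewrite !mul0r add0r expR0 mul1r dx_le.
Qed.

Lemma enorm_growth (w dw : K -> 'rV[K]_n) (V Rc t d : K) :
  0 <= V -> 2 * V <= Rc -> 0 <= t -> 0 <= d ->
  {within `[0, t], continuous w} ->
  (forall r : K, r \in `]0, t[%R -> is_derive r 1 w (dw r)) ->
  (forall r, r \in `]0, t[%R ->
     enorm (dw r) <= V * enorm (w r) + V * expR (Rc * r) * d) ->
  enorm (w t) <= expR (V * t) * enorm (w 0) + (expR (Rc * t) - expR (V * t)) * d.
Proof.
move=> V0 VRc t0 d0 wc wd dw_le.
pose psi r := d * expR ((Rc - V) * r).
have psid (r : K) : is_derive r 1 psi (d * ((Rc - V) * expR ((Rc - V) * r))).
  have exp_r := is_derive_expRM (Rc - V) r.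
  by apply: is_derive_eq.
suff : expR (- V * t) * enorm (w t) - psi t <= expR (- V * 0) * enorm (w 0) - psi 0.
  have e1 : expR (V * t) * expR (- V * t) = 1 by rewrite -expRD mulNr addrN expR0.
  have e2 : expR (V * t) * expR ((Rc - V) * t) = expR (Rc * t).
    by rewrite -expRD; congr expR; ring.
  move=> /(ler_wpM2l (ltW (expR_gt0 (V * t)))).
  rewrite /psi !mulr0 expR0 mul1r mulr1 !mulrBr mulrA e1 mul1r mulrCA e2 mulrBl.
  lra.
apply: (@enorm_gronwall w dw psi _ V 0 t V0 t0 wc wd psid).
move=> r r0t; apply: (le_trans (dw_le r r0t)); rewrite lerD2l.
have eE : expR (V * r) * expR ((Rc - V) * r) = expR (Rc * r).
  by rewrite -expRD; congr expR; ring.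
have -> : expR (V * r) * (d * ((Rc - V) * expR ((Rc - V) * r)))
          = (Rc - V) * expR (Rc * r) * d by rewrite -eE; ring.
rewrite ler_wpM2r // ler_wpM2r ?expR_ge0 //; lra.
Qed.

End NormComparison.

Lemma enorm_comb_le_enorm2 {K : realType} {n m : nat} (E X : K)
    (u : 'rV[K]_n) (v : 'rV[K]_m) :
  0 <= E <= X -> E * enorm u + (X - E) * enorm v <= X * enorm2 (u, v).
Proof.
move=> /andP[E0 EX].
have uv_ge0 : 0 <= sqnorm u + sqnorm v by rewrite addr_ge0 ?sqnorm_ge0.
have u_le : enorm u <= enorm2 (u, v) by rewrite ler_sqrt // lerDl sqnorm_ge0.
have v_le : enorm v <= enorm2 (u, v) by rewrite ler_sqrt // lerDr sqnorm_ge0.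
have XE0 : 0 <= X - E by rewrite subr_ge0.
have := ler_wpM2l E0 u_le; have := ler_wpM2l XE0 v_le; lra.
Qed.

Section Solutions.
Context {K : realType} {d1 d2 : nat} (T V Rc : K).
Variable H : K -> 'rV[K]_d1 -> 'rV[K]_d2 -> 'rV[K]_d1.

Lemma itv_sub_Icc0 r s t : 0 <= s -> t <= T -> r \in `[s, t]%R -> 0 <= r <= T.
Proof. by move=> s0 tT; rewrite in_itv /= => /andP[sr rt]; apply/andP; split; lra. Qed.

Hypothesis H_bounded : forall t a1 a2, 0 <= t <= T -> enorm (H t a1 a2) <= V.

Lemma is_solution_lipschitz a1 a2 x s t :
  is_solution T H a1 a2 x -> s \in Icc0 T -> t \in Icc0 T ->
  enorm (x s - x t) <= V * `|s - t|.
Proof.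
move=> [_ [xc xd]].
wlog st : s t / s <= t => [hwlog s_in t_in|].
  have [st|ts] := leP s t; first exact: hwlog.
  by rewrite -enormN opprB distrC hwlog // ltW.
move=> /set_mem/andP[s0 sT] /set_mem/andP[t0 tT].
rewrite -enormN opprB distrC ger0_norm ?subr_ge0 //.
apply: mean_value_enorm_le st _ _ _.
- by apply: continuous_subspaceW xc => r; apply: itv_sub_Icc0.
- move=> r; rewrite in_itv /= => /andP[sr rt]; apply: xd; apply/andP; split; lra.
- move=> r; rewrite in_itv /= => /andP[sr rt]; apply: H_bounded; apply/andP; split; lra.
Qed.

Hypothesis H_lipschitz2 : forall t a1, 0 <= t <= T -> forall a2 b2,
  enorm (H t a1 a2 - H t a1 b2) <= V * expR (Rc * t) * enorm (a2 - b2).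
Hypothesis H_lipschitz1 : forall t a2, 0 <= t <= T -> forall a1 b1,
  enorm (H t a1 a2 - H t b1 a2) <= V * enorm (a1 - b1).

Lemma is_solution_stability a1 a2 b1 b2 x y t : 0 <= V -> 2 * V <= Rc ->
  is_solution T H a1 a2 x -> is_solution T H b1 b2 y -> t \in Icc0 T ->
  enorm (x t - y t) <= expR (Rc * t) * enorm2 (a1 - b1, a2 - b2).
Proof.
move=> V0 VRc [x0 [xc xd]] [y0 [yc yd]] /set_mem/andP[t0 tT].
have E_le_X : 0 <= expR (V * t) <= expR (Rc * t).
  by rewrite expR_ge0 ler_expR ler_wpM2r //; lra.
apply: (le_trans _ (enorm_comb_le_enorm2 _ _ E_le_X)); rewrite -x0 -y0.
apply: (@enorm_growth K d1 (fun r => x r - y r)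
  (fun r => H r (x r) a2 - H r (y r) b2) V Rc t _ V0 VRc t0 (enorm_ge0 _)).
- by apply: continuous_subspaceW (within_continuousB xc yc) => r; apply: itv_sub_Icc0.
- move=> r; rewrite in_itv /= => /andP[r0 rt].
  have rT : 0 < r < T by apply/andP; split; lra.
  exact: is_deriveB (xd r rT) (yd r rT).
- move=> r; rewrite in_itv /= => /andP[r0 rt].
  have rT : 0 <= r <= T by apply/andP; split; lra.
  rewrite -(subrK (H r (y r) a2) (H r (x r) a2)) -addrA.
  by apply: le_trans (enormD _ _) _; apply: lerD; [apply: H_lipschitz1 | apply: H_lipschitz2].
Qed.

End Solutions.

Theorem proposition8p8 (K : realType) (d1 d2 : nat) (T V Rc : K)
  (H : K -> 'rV[K]_d1 -> 'rV[K]_d2 -> 'rV[K]_d1)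
  (G : 'rV[K]_d1 -> 'rV[K]_d2 -> K -> 'rV[K]_d1) :
  (0 < d1)%N -> (0 < d2)%N ->
  0 < T -> 0 < V -> 2 * V <= Rc ->
  {within [set p : K * ('rV[K]_d1 * 'rV[K]_d2) | 0 <= p.1 <= T],
     continuous (fun p => H p.1 p.2.1 p.2.2)} ->
  (forall t a1 a2, 0 <= t <= T -> enorm (H t a1 a2) <= V) ->
  (forall t a1, 0 <= t <= T -> forall a2 b2,
     enorm (H t a1 a2 - H t a1 b2) <= V * expR (Rc * t) * enorm (a2 - b2)) ->
  (forall t a2, 0 <= t <= T -> forall a1 b1,
     enorm (H t a1 a2 - H t b1 a2) <= V * enorm (a1 - b1)) ->
  (forall a1 a2, is_solution T H a1 a2 (G a1 a2)) ->
  R_special T Rc G.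
Proof.
move=> _ _ _ V_gt0 VRc _ H_bounded H_lipschitz2 H_lipschitz1 G_sol.
split=> [a1 a2|t t_in a1 a2 b1 b2].
  split=> [|s t s_in t_in]; first by case: (G_sol a1 a2).
  apply: (le_trans (is_solution_lipschitz H_bounded (G_sol a1 a2) s_in t_in)).
  by rewrite ler_wpM2r //; lra.
exact: (is_solution_stability H_lipschitz2 H_lipschitz1 (ltW V_gt0) VRc
  (G_sol a1 a2) (G_sol b1 b2) t_in).
Qed.
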